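(* Let $m\in\mathbb{N}$ and let $V=\sum_{k\in\mathbb{Z}}\widehat V(2k)e^{i2k\pi x}$ be a 1-periodic complex-valued distribution, regarded both as an element of $H_{per}^{-m}$ (with $\widehat V(2k+1)=0$ for all $k$) and of $H_+^{-m}$. Let $S(V)=D^{2m}\dotplus V$ on $L_2(-1,1)$ and $S_{\pm}(V)=D_{\pm}^{2m}\dotplus V$ on $L_2(0,1)$ be the corresponding $m$-sectorial form-sum operators. Then, under the decomposition $L_2(-1,1)=H^0_{per,+}\oplus H^0_{per,-}$ and the identifications $I_\pm:L_2(0,1)=H_\pm^0\to H^0_{per,\pm}$, $$S(V)=S_{+}(V)\oplus S_{-}(V),$$ and consequently $$\mathrm{spec}(S)=\mathrm{spec}(S_{+})\cup\mathrm{spec}(S_{-}),$$ where $\mathrm{spec}$ denotes the discrete spectrum counted with algebraic multiplicities (the union being the union of multisets).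
   Context: For $s\in\mathbb{R}$: $H_{per}^{s}$ is the space of 2-periodic series $f=\sum_{k\in\mathbb{Z}}\widehat f(k)e^{ik\pi x}$ on $[-1,1]$ with $\|f\|^2=\sum_k\langle k\rangle^{2s}|\widehat f(k)|^2<\infty$; $H_{+}^{s}$ is the space of series $f=\sum_{k}\widehat f(2k)e^{i2k\pi x}$ on $[0,1]$ with $\sum_k\langle 2k\rangle^{2s}|\widehat f(2k)|^2<\infty$; $H_{-}^{s}$ is the space of series $f=\sum_{k}\widehat f(2k+1)e^{i(2k+1)\pi x}$ on $[0,1]$ with $\sum_k\langle 2k+1\rangle^{2s}|\widehat f(2k+1)|^2<\infty$; $\langle k\rangle=1+|k|$. $H_{per}^0=L_2(-1,1)$, $H_\pm^0=L_2(0,1)$. $H^s_{per,+}=\{f\in H^s_{per}:\widehat f(2k+1)=0\ \forall k\}$, $H^s_{per,-}=\{f\in H^s_{per}:\widehat f(2k)=0\ \forall k\}$, so $H^s_{per}=H^s_{per,+}\oplus H^s_{per,-}$. $I_\pm:H^s_\pm\to H^s_{per,\pm}$ extends an element on $[0,1]$, given by its Fourier series, to the same series on $[-1,1]$; these are isometric isomorphisms. $D=-i\,d/dx$ on $H^1_{per}$ and $D_\pm=-i\,d/dx$ on $H^1_\pm$; $D^{2m}=|D|^{2m}$, $D_\pm^{2m}=|D_\pm|^{2m}$ act as multiplication by $(n\pi)^{2m}$ on the mode $e^{in\pi x}$. Products $V(x)u$ are formal products of Fourier series: $V(x)u=\sum_n(\sum_j\widehat V(n-j)\widehat u(j))e^{in\pi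 x}$. $S(V)$ is the $m$-sectorial operator on $L_2(-1,1)$ associated with the closed sectorial form $\langle D^{2m}u,v\rangle+\langle Vu,v\rangle$ on $H^m_{per}$ (pairing extending the $L_2(-1,1)$ inner product), with $\mathrm{Dom}(S)=\{u\in H^m_{per}: D^{2m}u+Vu\in L_2(-1,1)\}$, $S(V)u=D^{2m}u+Vu$; $S_\pm(V)$ is the $m$-sectorial operator on $L_2(0,1)$ associated with the form $\langle D_{\pm}^{2m}u,v\rangle_{\pm}+\langle Vu,v\rangle_{\pm}$ on $H_\pm^m$, with $\mathrm{Dom}(S_{\pm})=\{u\in H_{\pm}^{m}\mid D_{\pm}^{2m}u+Vu\in L_{2}(0,1)\}$, $S_\pm(V)u=D_{\pm}^{2m}u+Vu$. The spectra of these operators are discrete; $\mathrm{spec}(A)$ lists the eigenvalues with algebraic multiplicity, ordered lexicographically (by real part, then imaginary part). *)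

From Stdlib Require Import Reals ZArith.
From Coquelicot Require Import Coquelicot.
Open Scope R_scope.

(** Elements of the spaces H^s_per, H^s_+, H^s_- are represented by their
    Fourier coefficient sequences [f : Z -> C]:
    - H_per : f n is the coefficient of e^{i n pi x}        (frequency n)
    - H_+   : f k is the coefficient of e^{i 2k pi x}       (frequency 2k)
    - H_-   : f k is the coefficient of e^{i (2k+1) pi x}   (frequency 2k+1) *)

Definition fseq := Z -> C.

Definition freq_per (n : Z) : Z := n.
Definition freq_plus (k : Z) : Z := (2 * k)%Z.
Definition freq_minus (k : Z) : Z := (2 * k + 1)%Z.

Definition jb (k : Z) : R := 1 + Rabs (IZR k).

Definition zsummable (a : Z -> R) : Prop :=
  ex_series (fun n : nat => a (Z.of_nat n)) /\
  ex_series (fun n : nat => a (Z.opp (Z.of_nat (S n)))).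

Definition zSeries (f : Z -> C) : C :=
  (Series (fun n : nat => fst (f (Z.of_nat n)))
     + Series (fun n : nat => fst (f (Z.opp (Z.of_nat (S n))))),
   Series (fun n : nat => snd (f (Z.of_nat n)))
     + Series (fun n : nat => snd (f (Z.opp (Z.of_nat (S n)))))).

Definition inH (freq : Z -> Z) (s : Z) (f : fseq) : Prop :=
  zsummable (fun k => powerRZ (jb (freq k)) (2 * s) * (Cmod (f k))^2).

Definition Iplus (a : fseq) : fseq :=
  fun n => if Z.even n then a (Z.div2 n) else RtoC 0.
Definition Iminus (b : fseq) : fseq :=
  fun n => if Z.even n then RtoC 0 else b (Z.div2 n).

(** The potential V = sum_k Vhat(2k) e^{i 2k pi x} is given by
    [v : Z -> C], v k = Vhat(2k).  As an element of H_per its coefficient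
    sequence is [Vper v] (odd coefficients vanish). *)
Definition Vper (v : fseq) : fseq := Iplus v.

Definition mul_per (v u : fseq) : fseq :=
  fun n => zSeries (fun j => Cmult (Vper v (n - j)%Z) (u j)).
(* on [0,1], H_+ : (Vu)^(2n) = sum_j Vhat(2n-2j) uhat(2j);
   on [0,1], H_- : (Vu)^(2n+1) = sum_j Vhat(2n-2j) uhat(2j+1);
   in both cases, in the index k, the coefficient is sum_j v(n-j) u(j). *)
Definition mul_half (v u : fseq) : fseq :=
  fun n => zSeries (fun j => Cmult (v (n - j)%Z) (u j)).

Definition Dpow (freq : Z -> Z) (m : nat) (u : fseq) : fseq :=
  fun k => Cmult (RtoC ((IZR (freq k) * PI) ^ (2 * m))) (u k).

Definition Sact (freq : Z -> Z) (mul : fseq -> fseq) (m : nat) (u : fseq) : fseq :=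
  fun k => Cplus (Dpow freq m u k) (mul u k).
Definition Sdom (freq : Z -> Z) (mul : fseq -> fseq) (m : nat) (u : fseq) : Prop :=
  inH freq (Z.of_nat m) u /\ inH freq 0 (Sact freq mul m u).

Definition S_dom (m : nat) (v : fseq) := Sdom freq_per (mul_per v) m.
Definition S_op  (m : nat) (v : fseq) := Sact freq_per (mul_per v) m.
Definition Sp_dom (m : nat) (v : fseq) := Sdom freq_plus (mul_half v) m.
Definition Sp_op  (m : nat) (v : fseq) := Sact freq_plus (mul_half v) m.
Definition Sm_dom (m : nat) (v : fseq) := Sdom freq_minus (mul_half v) m.
Definition Sm_op  (m : nat) (v : fseq) := Sact freq_minus (mul_half v) m.

Definition zero_seq : fseq := fun _ => RtoC 0.
Fixpoint gker (Dom : fseq -> Prop) (A : fseq -> fseq) (lam : C) (k : nat)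
  (u : fseq) : Prop :=
  match k with
  | O => u = zero_seq
  | S k' => Dom u /\ gker Dom A lam k' (fun j => Cminus (A u j) (Cmult lam (u j)))
  end.
Definition gen_eig (Dom : fseq -> Prop) (A : fseq -> fseq) (lam : C) (u : fseq) :=
  exists k, gker Dom A lam k u.

Fixpoint csum (n : nat) (f : nat -> C) : C :=
  match n with O => RtoC 0 | S n' => Cplus (csum n' f) (f n') end.

Definition lin_indep (n : nat) (w : nat -> fseq) : Prop :=
  forall c : nat -> C,
    (forall k, csum n (fun i => Cmult (c i) (w i k)) = RtoC 0) ->
    forall i, (i < n)%nat -> c i = RtoC 0.

(** [mult_ge Dom A lam n]: the algebraic multiplicity of lam (dimension of
    its root space, in N U {oo}) is at least n. *)
Definition mult_ge (Dom : fseq -> Prop) (A : fseq -> fseq) (lam : C) (n : nat) :=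
  exists w : nat -> fseq,
    (forall i, (i < n)%nat -> gen_eig Dom A lam (w i)) /\ lin_indep n w.

From Stdlib Require Import Reals ZArith Lia Lra Classical ClassicalEpsilon FunctionalExtensionality.
From Coquelicot Require Import Coquelicot.

(* Since V has only even Fourier modes, the formal product V u maps the even
   coefficients of u to even ones and the odd to odd ones, acting on each
   class exactly as the product on [0,1]; D^{2m} is diagonal, and the weighted
   l^2 sums defining H^s_per split into those of H^s_+ and H^s_-.  Hence
   I_+ (+) I_- carries S_+(V) (+) S_-(V) onto S(V), domains included, and the
   root space of S(V) at lam is the direct sum of those of S_+(V) and S_-(V).
   Multiplicities then add: n independent vectors of U (+) W are spanned by
   bases extracted from their U- and W-components, so by Steinitz exchange
   n <= dim U + dim W; conversely independent families of U and W juxtapose. *)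

(** * Series with interleaved or stretched terms *)

Lemma sum_n_le (a : nat -> R) : (forall n, 0 <= a n) ->
  forall n p, (n <= p)%nat -> sum_n a n <= sum_n a p.
Proof.
  intros Ha n p Hnp. induction Hnp as [|p _ IH]; [lra|].
  rewrite sum_Sn. unfold plus; simpl. specialize (Ha (S p)). lra.
Qed.

Lemma sum_n_nonneg (a : nat -> R) : (forall n, 0 <= a n) -> forall n, 0 <= sum_n a n.
Proof.
  intros Ha n. apply Rle_trans with (sum_n a 0).
  - rewrite sum_O. apply Ha.
  - apply sum_n_le; [exact Ha | lia].
Qed.

Lemma ex_series_nonneg_bounded (a : nat -> R) : (forall n, 0 <= a n) ->
  ex_series a <-> exists M, forall n, sum_n a n <= M.
Proof.
  intros Ha.
  assert (Hincr : forall n, sum_n a n <= sum_n a (S n)) by (intros n; apply sum_n_le; [exact Ha | lia]).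
  split.
  - intros [l Hl]. exists l. intros n. apply is_lim_seq_incr_compare; [exact Hl | exact Hincr].
  - intros [M HM]. destruct (ex_finite_lim_seq_incr _ M Hincr HM) as [l Hl]. exists l. exact Hl.
Qed.

Lemma ex_series_0 (a : nat -> R) : (forall n, a n = 0) -> ex_series a.
Proof.
  intros Ha. apply ex_series_nonneg_bounded.
  - intros n. rewrite Ha. lra.
  - exists 0. intros n. rewrite (sum_n_ext _ (fun _ => 0)) by exact Ha. rewrite sum_n_const. lra.
Qed.

Lemma Series_0 (a : nat -> R) : (forall n, a n = 0) -> Series a = 0.
Proof.
  intros Ha. transitivity (0 * Series a); [|ring].
  rewrite <- Series_scal_l. apply Series_ext. intros n. rewrite Ha. ring.
Qed.

Section Interleave.

Variables h f g : nat -> R.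
Hypothesis h_even : forall n, h (2 * n)%nat = f n.
Hypothesis h_odd : forall n, h (2 * n + 1)%nat = g n.

Lemma sum_n_interleave k : sum_n h (2 * k + 1) = sum_n f k + sum_n g k.
Proof.
  induction k as [|k IH].
  - change (sum_n h 1 = sum_n f 0 + sum_n g 0).
    rewrite sum_Sn, !sum_O, <- (h_even 0), <- (h_odd 0). reflexivity.
  - replace (2 * S k + 1)%nat with (S (S (2 * k + 1))) by lia.
    rewrite (sum_Sn h (S (2 * k + 1))), (sum_Sn h (2 * k + 1)), IH, (sum_Sn f k), (sum_Sn g k).
    replace (S (2 * k + 1)) with (2 * S k)%nat by lia.
    replace (S (2 * S k)) with (2 * S k + 1)%nat by lia.
    rewrite h_even, h_odd. unfold plus; simpl. lra.
Qed.

Lemma ex_series_interleave : (forall n, 0 <= f n) -> (forall n, 0 <= g n) ->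
  ex_series h <-> ex_series f /\ ex_series g.
Proof.
  intros Hf Hg.
  assert (Hh : forall n, 0 <= h n).
  { intros n. destruct (Nat.Even_or_Odd n) as [[k ->]|[k ->]];
      [rewrite h_even | rewrite h_odd]; auto. }
  rewrite !ex_series_nonneg_bounded by assumption. split.
  - intros [M HM].
    split; exists M; intros n; rewrite <- (HM (2 * n + 1)%nat), sum_n_interleave;
      pose proof (sum_n_nonneg f Hf n); pose proof (sum_n_nonneg g Hg n); lra.
  - intros [[M1 H1] [M2 H2]]. exists (M1 + M2). intros n.
    apply Rle_trans with (sum_n h (2 * n + 1)); [apply sum_n_le; [exact Hh | lia]|].
    rewrite sum_n_interleave. specialize (H1 n). specialize (H2 n). lra.
Qed.

End Interleave.

Lemma is_LimSup_seq_div2 (s : nat -> R) l :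
  is_LimSup_seq s l -> is_LimSup_seq (fun n => s (Nat.div2 n)) l.
Proof.
  destruct l as [l| |]; simpl; intros H.
  - intros eps. destruct (H eps) as [Hfreq [N HN]]. split.
    + intros M. destruct (Hfreq M) as [n [Hn Hs]]. exists (2 * n)%nat.
      rewrite Nat.div2_double. split; [lia | exact Hs].
    + exists (2 * N)%nat. intros n Hn. apply HN, Nat.div2_le_lower_bound, Hn.
  - intros M N. destruct (H M N) as [n [Hn Hs]]. exists (2 * n)%nat.
    rewrite Nat.div2_double. split; [lia | exact Hs].
  - intros M. destruct (H M) as [N HN]. exists (2 * N)%nat. intros n Hn.
    apply HN, Nat.div2_le_lower_bound, Hn.
Qed.

Lemma is_LimInf_seq_div2 (s : nat -> R) l :
  is_LimInf_seq s l -> is_LimInf_seq (fun n => s (Nat.div2 n)) l.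
Proof.
  intros H. apply is_LimSup_opp_LimInf_seq.
  apply (is_LimSup_seq_div2 (fun n => - s n)).
  apply is_LimSup_opp_LimInf_seq. exact H.
Qed.

Lemma Lim_seq_div2 (s : nat -> R) : Lim_seq (fun n => s (Nat.div2 n)) = Lim_seq s.
Proof.
  unfold Lim_seq.
  destruct (ex_LimSup_seq s) as [ls Hs]. destruct (ex_LimInf_seq s) as [li Hi].
  rewrite (is_LimSup_seq_unique _ _ Hs), (is_LimInf_seq_unique _ _ Hi),
    (is_LimSup_seq_unique _ _ (is_LimSup_seq_div2 _ _ Hs)),
    (is_LimInf_seq_unique _ _ (is_LimInf_seq_div2 _ _ Hi)).
  reflexivity.
Qed.

(* No summability is assumed: the partial sums of [h] are those of [g], each
   repeated twice, so even the junk values of [Series] agree. *)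
Lemma Series_stretch_even (h g : nat -> R) :
  (forall n, h (2 * n)%nat = g n) -> (forall n, h (2 * n + 1)%nat = 0) ->
  Series h = Series g.
Proof.
  intros He Ho.
  assert (Hodd : forall k, sum_n h (2 * k + 1) = sum_n g k).
  { intros k. rewrite (sum_n_interleave h g (fun _ => 0) He Ho), sum_n_const. simpl. ring. }
  assert (Hsum : forall n, sum_n h n = sum_n g (Nat.div2 n)).
  { intros n. destruct (Nat.Even_or_Odd n) as [[k ->]|[k ->]].
    - rewrite Nat.div2_double, <- (Hodd k).
      replace (2 * k + 1)%nat with (S (2 * k)) by lia.
      rewrite (sum_Sn h (2 * k)). replace (S (2 * k)) with (2 * k + 1)%nat by lia.
      rewrite Ho. symmetry. apply Rplus_0_r.
    - rewrite Nat.div2_odd'. apply Hodd. }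
  unfold Series. rewrite (Lim_seq_ext _ _ Hsum), (Lim_seq_div2 (sum_n g)). reflexivity.
Qed.

Lemma Series_stretch_odd (h g : nat -> R) :
  (forall n, h (2 * n)%nat = 0) -> (forall n, h (2 * n + 1)%nat = g n) ->
  Series h = Series g.
Proof.
  intros He Ho. rewrite Series_incr_1_aux by exact (He 0%nat).
  apply Series_stretch_even; intros n.
  - rewrite <- Ho. f_equal. lia.
  - rewrite <- (He (S n)). f_equal. lia.
Qed.

(** * Sums over Z *)

Definition zpos (f : Z -> R) (n : nat) : R := f (Z.of_nat n).
Definition zneg (f : Z -> R) (n : nat) : R := f (- Z.of_nat (S n))%Z.
Definition zsum (f : Z -> R) : R := Series (zpos f) + Series (zneg f).

Lemma zsummable_interleave (h f g : Z -> R) :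
  (forall z, 0 <= f z) -> (forall z, 0 <= g z) ->
  (forall z, h (2 * z)%Z = f z) -> (forall z, h (2 * z + 1)%Z = g z) ->
  zsummable h <-> zsummable f /\ zsummable g.
Proof.
  intros Hf Hg He Ho. unfold zsummable. fold (zpos h) (zpos f) (zpos g) (zneg h) (zneg f) (zneg g).
  (* on the negative half the roles of the parities are swapped: -(2n+1) is odd *)
  rewrite (ex_series_interleave (zpos h) (zpos f) (zpos g)),
    (ex_series_interleave (zneg h) (zneg g) (zneg f)); try tauto;
    intros n; unfold zpos, zneg; auto.
  - rewrite <- Ho. f_equal. lia.
  - rewrite <- He. f_equal. lia.
  - rewrite <- He. f_equal. lia.
  - rewrite <- Ho. f_equal. lia.
Qed.

Lemma zsum_even_support (f g : Z -> R) :
  (forall z, f (2 * z)%Z = g z) -> (forall z, f (2 * z + 1)%Z = 0) -> zsum f = zsum g.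
Proof.
  intros He Ho. unfold zsum, zpos, zneg. f_equal.
  - apply Series_stretch_even; intros n.
    + rewrite <- He. f_equal. lia.
    + rewrite <- (Ho (Z.of_nat n)). f_equal. lia.
  - apply Series_stretch_odd; intros n.
    + rewrite <- (Ho (- Z.of_nat (S n))%Z). f_equal. lia.
    + rewrite <- He. f_equal. lia.
Qed.

Lemma zsum_odd_support (f g : Z -> R) :
  (forall z, f (2 * z)%Z = 0) -> (forall z, f (2 * z + 1)%Z = g z) -> zsum f = zsum g.
Proof.
  intros He Ho. unfold zsum, zpos, zneg. f_equal.
  - apply Series_stretch_odd; intros n.
    + rewrite <- (He (Z.of_nat n)). f_equal. lia.
    + rewrite <- Ho. f_equal. lia.
  - apply Series_stretch_even; intros n.
    + rewrite <- Ho. f_equal. lia.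
    + rewrite <- (He (- Z.of_nat (S n))%Z). f_equal. lia.
Qed.

Lemma zSeries_zsum (F : Z -> C) :
  zSeries F = (zsum (fun z => fst (F z)), zsum (fun z => snd (F z))).
Proof. reflexivity. Qed.

Lemma zSeries_even_support (F G : Z -> C) :
  (forall z, F (2 * z)%Z = G z) -> (forall z, F (2 * z + 1)%Z = RtoC 0) ->
  zSeries F = zSeries G.
Proof.
  intros He Ho. rewrite !zSeries_zsum.
  f_equal; apply zsum_even_support; intros z; rewrite ?He, ?Ho; reflexivity.
Qed.

Lemma zSeries_odd_support (F G : Z -> C) :
  (forall z, F (2 * z)%Z = RtoC 0) -> (forall z, F (2 * z + 1)%Z = G z) ->
  zSeries F = zSeries G.
Proof.
  intros He Ho. rewrite !zSeries_zsum.
  f_equal; apply zsum_odd_support; intros z; rewrite ?He, ?Ho; reflexivity.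
Qed.

Lemma zSeries_0 (F : Z -> C) : (forall z, F z = RtoC 0) -> zSeries F = RtoC 0.
Proof.
  intros H0. rewrite zSeries_zsum. unfold zsum, zpos, zneg.
  rewrite !Series_0 by (intros; rewrite H0; reflexivity).
  rewrite Rplus_0_r. reflexivity.
Qed.

(** * The identification I_+ (+) I_- *)

Definition Isum (a b : fseq) : fseq := fun n => Cplus (Iplus a n) (Iminus b n).
Definition evenp (w : fseq) : fseq := fun z => w (2 * z)%Z.
Definition oddp (w : fseq) : fseq := fun z => w (2 * z + 1)%Z.

Lemma Z_div2_double (z : Z) : Z.div2 (2 * z) = z.
Proof. pose proof (Z.div2_odd (2 * z)) as E. rewrite Z.odd_even in E. cbn [Z.b2z] in E. lia. Qed.

Lemma Z_div2_succ_double (z : Z) : Z.div2 (2 * z + 1) = z.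
Proof. pose proof (Z.div2_odd (2 * z + 1)) as E. rewrite Z.odd_odd in E. cbn [Z.b2z] in E. lia. Qed.

Lemma Iplus_even (a : fseq) z : Iplus a (2 * z)%Z = a z.
Proof. unfold Iplus. rewrite Z.even_even, Z_div2_double. reflexivity. Qed.

Lemma Iplus_odd (a : fseq) z : Iplus a (2 * z + 1)%Z = RtoC 0.
Proof. unfold Iplus. rewrite Z.even_odd. reflexivity. Qed.

Lemma Iminus_even (b : fseq) z : Iminus b (2 * z)%Z = RtoC 0.
Proof. unfold Iminus. rewrite Z.even_even. reflexivity. Qed.

Lemma Iminus_odd (b : fseq) z : Iminus b (2 * z + 1)%Z = b z.
Proof. unfold Iminus. rewrite Z.even_odd, Z_div2_succ_double. reflexivity. Qed.

Lemma Isum_even (a b : fseq) z : Isum a b (2 * z)%Z = a z.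
Proof. unfold Isum. rewrite Iplus_even, Iminus_even. apply Cplus_0_r. Qed.

Lemma Isum_odd (a b : fseq) z : Isum a b (2 * z + 1)%Z = b z.
Proof. unfold Isum. rewrite Iplus_odd, Iminus_odd. apply Cplus_0_l. Qed.

Lemma evenp_Isum (a b : fseq) : evenp (Isum a b) = a.
Proof. apply functional_extensionality. apply Isum_even. Qed.

Lemma oddp_Isum (a b : fseq) : oddp (Isum a b) = b.
Proof. apply functional_extensionality. apply Isum_odd. Qed.

Lemma Isum_parts (w : fseq) : Isum (evenp w) (oddp w) = w.
Proof.
  apply functional_extensionality. intros n.
  destruct (Z.Even_or_Odd n) as [[z ->]|[z ->]]; rewrite ?Isum_even, ?Isum_odd; reflexivity.
Qed.

Lemma Isum_eq_zero (a b : fseq) : Isum a b = zero_seq <-> a = zero_seq /\ b = zero_seq.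
Proof.
  split.
  - intros H. split; [rewrite <- (evenp_Isum a b) | rewrite <- (oddp_Isum a b)];
      rewrite H; reflexivity.
  - intros [-> ->]. exact (Isum_parts zero_seq).
Qed.

Lemma Isum_map2 (op : C -> C -> C) (a b a' b' : fseq) :
  (fun n => op (Isum a b n) (Isum a' b' n))
  = Isum (fun z => op (a z) (a' z)) (fun z => op (b z) (b' z)).
Proof.
  apply functional_extensionality. intros n.
  destruct (Z.Even_or_Odd n) as [[z ->]|[z ->]]; rewrite ?Isum_even, ?Isum_odd; reflexivity.
Qed.

Lemma csum_ext_lt n (f g : nat -> C) :
  (forall i, (i < n)%nat -> f i = g i) -> csum n f = csum n g.
Proof. induction n; intros H; simpl; [reflexivity|]. rewrite IHn, H; auto. Qed.

Lemma csum_zero n (f : nat -> C) : (forall i, (i < n)%nat -> f i = RtoC 0) -> csum n f = RtoC 0.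
Proof. induction n; intros H; simpl; [reflexivity|]. rewrite IHn, H; auto. apply Cplus_0_l. Qed.

Lemma csum_plus n (f g : nat -> C) :
  csum n (fun i => Cplus (f i) (g i)) = Cplus (csum n f) (csum n g).
Proof. induction n; simpl; [ring|]. rewrite IHn. ring. Qed.

Lemma csum_scal n c (f : nat -> C) : csum n (fun i => Cmult c (f i)) = Cmult c (csum n f).
Proof. induction n; simpl; [ring|]. rewrite IHn. ring. Qed.

Lemma csum_split n1 n2 (f : nat -> C) :
  csum (n1 + n2) f = Cplus (csum n1 f) (csum n2 (fun i => f (n1 + i)%nat)).
Proof.
  induction n2; simpl; [rewrite Nat.add_0_r; ring|].
  rewrite Nat.add_succ_r. simpl. rewrite IHn2. ring.
Qed.

Lemma csum_swap n r (f : nat -> nat -> C) :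
  csum n (fun i => csum r (fun j => f i j)) = csum r (fun j => csum n (fun i => f i j)).
Proof.
  induction n; simpl; [symmetry; apply csum_zero; auto|].
  rewrite IHn, <- csum_plus. reflexivity.
Qed.

Definition lc (r : nat) (c : nat -> C) (y : nat -> fseq) : fseq :=
  fun k => csum r (fun j => Cmult (c j) (y j k)).

Definition in_span (r : nat) (y : nat -> fseq) (x : fseq) : Prop := exists c, x = lc r c y.

Definition catf {A : Type} (r : nat) (f g : nat -> A) : nat -> A :=
  fun j => if (j <? r)%nat then f j else g (j - r)%nat.

Lemma catf_l {A : Type} r (f g : nat -> A) j : (j < r)%nat -> catf r f g j = f j.
Proof. intros Hj. unfold catf. rewrite (proj2 (Nat.ltb_lt j r) Hj). reflexivity. Qed.

Lemma catf_r {A : Type} r (f g : nat -> A) j : catf r f g (r + j)%nat = g j.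
Proof.
  unfold catf. rewrite (proj2 (Nat.ltb_ge (r + j) r)) by lia.
  f_equal. lia.
Qed.

Lemma catf_at {A : Type} r (f g : nat -> A) : catf r f g r = g 0%nat.
Proof. unfold catf. rewrite Nat.ltb_irrefl, Nat.sub_diag. reflexivity. Qed.

Lemma lc_ext_lt r c c' y y' :
  (forall j, (j < r)%nat -> c j = c' j) -> (forall j, (j < r)%nat -> y j = y' j) ->
  lc r c y = lc r c' y'.
Proof.
  intros Hc Hy. apply functional_extensionality. intros k. unfold lc.
  apply csum_ext_lt. intros j Hj. rewrite Hc, Hy; auto.
Qed.

Lemma lc_catf r1 r2 c (f g : nat -> fseq) :
  lc (r1 + r2) c (catf r1 f g)
  = fun k => Cplus (lc r1 c f k) (lc r2 (fun j => c (r1 + j)%nat) g k).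
Proof.
  apply functional_extensionality. intros k. unfold lc. rewrite csum_split.
  f_equal; apply csum_ext_lt; intros j Hj; [rewrite catf_l | rewrite catf_r]; auto.
Qed.

Lemma lc_zero_family r c : lc r c (fun _ => zero_seq) = zero_seq.
Proof.
  apply functional_extensionality. intros k. unfold lc.
  apply csum_zero. intros. unfold zero_seq. ring.
Qed.

Lemma lc_Isum r c (f g : nat -> fseq) :
  lc r c (fun j => Isum (f j) (g j)) = Isum (lc r c f) (lc r c g).
Proof.
  apply functional_extensionality. intros n. unfold lc.
  destruct (Z.Even_or_Odd n) as [[z ->]|[z ->]]; rewrite ?Isum_even, ?Isum_odd;
    apply csum_ext_lt; intros; rewrite ?Isum_even, ?Isum_odd; reflexivity.
Qed.

(** * Linear independence and dimension *)

Lemma underdetermined_nontrivial_solution (r : nat) : forall n (M : nat -> nat -> C),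
  (r < n)%nat ->
  exists d : nat -> C, (exists i, (i < n)%nat /\ d i <> RtoC 0) /\
    forall j, (j < r)%nat -> csum n (fun i => Cmult (d i) (M i j)) = RtoC 0.
Proof.
  assert (one_neq_0 : RtoC 1 <> RtoC 0) by (intros H; injection H; lra).
  induction r as [|r IH]; intros n M Hn.
  { exists (fun _ => RtoC 1). split; [exists 0%nat; auto | intros; lia]. }
  destruct n as [|n]; [lia|].
  destruct (classic (exists q, (q < S r)%nat /\ M n q <> RtoC 0)) as [[q [Hq Hp]]|Hnone].
  - (* eliminate the last unknown with the pivot [M n q], dropping equation [q] *)
    set (p := M n q).
    set (skip := fun j => if (j <? q)%nat then j else S j).
    set (M' := fun i j => Cminus (M i j) (Cmult (Cdiv (M i q) p) (M n j))).
    destruct (IH n (fun i j => M' i (skip j))) as [d [[i0 [Hi0 Hd0]] Hd]]; [lia|].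
    set (s := csum n (fun i => Cmult (d i) (M i q))).
    exists (catf n d (fun _ => Copp (Cdiv s p))). split.
    { exists i0. rewrite catf_l by exact Hi0. split; [lia | exact Hd0]. }
    intros j Hj. simpl. rewrite catf_at.
    rewrite (csum_ext_lt n _ (fun i => Cplus (Cmult (d i) (M' i j))
                                             (Cmult (Cdiv (M n j) p) (Cmult (d i) (M i q))))).
    2:{ intros i Hi. rewrite catf_l by exact Hi. unfold M'. field. exact Hp. }
    rewrite csum_plus, csum_scal. fold s.
    assert (Hreduced : csum n (fun i => Cmult (d i) (M' i j)) = RtoC 0).
    { destruct (lt_eq_lt_dec j q) as [[Hlt| ->]|Hgt].
      - pose proof (Hd j ltac:(lia)) as E. unfold skip in E.
        rewrite (proj2 (Nat.ltb_lt j q) Hlt) in E. exact E.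
      - apply csum_zero. intros i _. unfold M'. fold p. field. exact Hp.
      - pose proof (Hd (j - 1)%nat ltac:(lia)) as E. unfold skip in E.
        rewrite (proj2 (Nat.ltb_ge (j - 1) q)) in E by lia.
        replace (S (j - 1)) with j in E by lia. exact E. }
    rewrite Hreduced. field. exact Hp.
  - (* the last unknown occurs in no equation *)
    exists (catf n (fun _ => RtoC 0) (fun _ => RtoC 1)). split.
    { exists n. rewrite catf_at. split; [lia | exact one_neq_0]. }
    intros j Hj. simpl. rewrite catf_at, csum_zero.
    + assert (E : M n j = RtoC 0) by (apply NNPP; intros Hne; apply Hnone; exists j; auto).
      rewrite E. ring.
    + intros i Hi. rewrite catf_l by exact Hi. ring.
Qed.

Lemma lin_indep_span_le r n (x y : nat -> fseq) :
  lin_indep n x -> (forall i, (i < n)%nat -> in_span r y (x i)) -> (n <= r)%nat.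
Proof.
  intros Hx Hspan. apply Nat.nlt_ge. intros Hrn.
  destruct (choice (fun i c => (i < n)%nat -> x i = lc r c y)) as [coef Hcoef].
  { intros i. destruct (Nat.lt_ge_cases i n) as [Hi|Hi].
    - destruct (Hspan i Hi) as [c Hc]. exists c. auto.
    - exists (fun _ => RtoC 0). intros; lia. }
  destruct (underdetermined_nontrivial_solution r n coef Hrn) as [d [[i0 [Hi0 Hd0]] Hd]].
  apply Hd0, (Hx d); [|exact Hi0]. intros k.
  rewrite (csum_ext_lt n _ (fun i => csum r (fun j => Cmult (Cmult (d i) (coef i j)) (y j k)))).
  - rewrite csum_swap. apply csum_zero. intros j Hj.
    rewrite (csum_ext_lt n _ (fun i => Cmult (y j k) (Cmult (d i) (coef i j)))) by (intros; ring).
    rewrite csum_scal, Hd by exact Hj. ring.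
  - intros i Hi. rewrite (Hcoef i Hi). unfold lc. rewrite <- csum_scal.
    apply csum_ext_lt. intros. ring.
Qed.

Lemma lin_indep_prefix r n (alpha : nat -> fseq) :
  (n <= r)%nat -> lin_indep r alpha -> lin_indep n alpha.
Proof.
  intros Hnr Hli c Hc i Hi.
  rewrite <- (catf_l n c (fun _ => RtoC 0) i Hi).
  apply (Hli (catf n c (fun _ => RtoC 0))); [|lia]. intros k.
  replace r with (n + (r - n))%nat by lia. rewrite csum_split, (csum_zero (r - n)).
  - rewrite Cplus_0_r, <- (Hc k). apply csum_ext_lt. intros j Hj. rewrite catf_l; auto.
  - intros j _. rewrite catf_r. ring.
Qed.

Lemma lin_indep_extend r (alpha : nat -> fseq) x :
  lin_indep r alpha -> ~ in_span r alpha x -> lin_indep (r + 1) (catf r alpha (fun _ => x)).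
Proof.
  intros Hli Hx c Hc.
  assert (Hk : forall k, Cplus (lc r c alpha k) (Cmult (c r) (x k)) = RtoC 0).
  { intros k. rewrite <- (Hc k).
    change (csum (r + 1) _) with (lc (r + 1) c (catf r alpha (fun _ => x)) k).
    rewrite lc_catf. unfold lc. simpl. rewrite Nat.add_0_r. ring. }
  assert (Hcr : c r = RtoC 0).
  { apply NNPP. intros Hne. apply Hx.
    exists (fun i => Copp (Cdiv (c i) (c r))). apply functional_extensionality. intros k.
    unfold lc. rewrite (csum_ext_lt r _ (fun i => Cmult (Copp (Cinv (c r))) (Cmult (c i) (alpha i k))))
      by (intros; field; exact Hne).
    rewrite csum_scal. fold (lc r c alpha k).
    replace (lc r c alpha k) with (Copp (Cmult (c r) (x k)))
      by (rewrite <- (Cplus_0_l (Copp _)), <- (Hk k); ring).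
    field. exact Hne. }
  assert (Hlow : forall i, (i < r)%nat -> c i = RtoC 0).
  { apply Hli. intros k. specialize (Hk k). rewrite Hcr in Hk.
    rewrite <- Hk. unfold lc. ring. }
  intros i Hi. destruct (Nat.eq_dec i r) as [->|]; [exact Hcr | apply Hlow; lia].
Qed.

Lemma in_span_extend r (alpha : nat -> fseq) x u :
  in_span r alpha u -> in_span (r + 1) (catf r alpha (fun _ => x)) u.
Proof.
  intros [c ->]. exists (catf r c (fun _ => RtoC 0)).
  rewrite lc_catf. apply functional_extensionality. intros k.
  unfold lc at 3. simpl. rewrite catf_r.
  rewrite (lc_ext_lt r (catf r c (fun _ => RtoC 0)) c alpha alpha)
    by (intros; try apply catf_l; auto).
  ring.
Qed.

Lemma in_span_new r (alpha : nat -> fseq) x : in_span (r + 1) (catf r alpha (fun _ => x)) x.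
Proof.
  exists (catf r (fun _ => RtoC 0) (fun _ => RtoC 1)).
  rewrite lc_catf. apply functional_extensionality. intros k.
  unfold lc. simpl. rewrite catf_r, csum_zero.
  - ring.
  - intros j Hj. rewrite catf_l by exact Hj. ring.
Qed.

Lemma exists_indep_spanning_subfamily (P : fseq -> Prop) (a : nat -> fseq) n :
  (forall i, (i < n)%nat -> P (a i)) ->
  exists r alpha, (forall j, (j < r)%nat -> P (alpha j)) /\ lin_indep r alpha /\
    (forall i, (i < n)%nat -> in_span r alpha (a i)).
Proof.
  induction n as [|n IH]; intros HP.
  { exists 0%nat, (fun _ => zero_seq). repeat split; [intros; lia | intros c _ i Hi; lia | intros; lia]. }
  destruct IH as [r [alpha [Halpha [Hli Hspan]]]]; [intros; apply HP; lia|].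
  destruct (classic (in_span r alpha (a n))) as [Hin|Hout].
  - exists r, alpha. repeat split; auto. intros i Hi.
    destruct (Nat.eq_dec i n) as [->|]; [exact Hin | apply Hspan; lia].
  - exists (r + 1)%nat, (catf r alpha (fun _ => a n)). repeat split.
    + intros j Hj. unfold catf. destruct (Nat.ltb_spec j r); [apply Halpha | apply HP]; auto.
    + apply lin_indep_extend; assumption.
    + intros i Hi. destruct (Nat.eq_dec i n) as [->|].
      * apply in_span_new.
      * apply in_span_extend, Hspan. lia.
Qed.

Definition dim_ge (P : fseq -> Prop) (n : nat) : Prop :=
  exists w : nat -> fseq, (forall i, (i < n)%nat -> P (w i)) /\ lin_indep n w.

Lemma dim_ge_le (P : fseq -> Prop) r n : (n <= r)%nat -> dim_ge P r -> dim_ge P n.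
Proof.
  intros Hnr [w [Hw Hli]]. exists w. split.
  - intros i Hi. apply Hw. lia.
  - exact (lin_indep_prefix r n w Hnr Hli).
Qed.

Section DirectSum.

Variables P Pp Pm : fseq -> Prop.

Lemma dim_ge_Isum_split n :
  (forall a b, P (Isum a b) -> Pp a /\ Pm b) ->
  dim_ge P n -> exists n1 n2, n = (n1 + n2)%nat /\ dim_ge Pp n1 /\ dim_ge Pm n2.
Proof.
  intros HP [w [Hw Hli]].
  assert (Hparts : forall i, (i < n)%nat -> Pp (evenp (w i)) /\ Pm (oddp (w i))).
  { intros i Hi. apply HP. rewrite Isum_parts. exact (Hw i Hi). }
  destruct (exists_indep_spanning_subfamily Pp (fun i => evenp (w i)) n)
    as [r1 [alpha [Halpha [Hia Hsa]]]]; [intros; apply Hparts; auto|].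
  destruct (exists_indep_spanning_subfamily Pm (fun i => oddp (w i)) n)
    as [r2 [beta [Hbeta [Hib Hsb]]]]; [intros; apply Hparts; auto|].
  assert (Hn : (n <= r1 + r2)%nat).
  { apply (lin_indep_span_le (r1 + r2) n w
      (fun j => Isum (catf r1 alpha (fun _ => zero_seq) j) (catf r1 (fun _ => zero_seq) beta j)) Hli).
    intros i Hi. destruct (Hsa i Hi) as [ca Ea]. destruct (Hsb i Hi) as [cb Eb].
    exists (catf r1 ca cb).
    rewrite lc_Isum, !lc_catf, !lc_zero_family, <- (Isum_parts (w i)), Ea, Eb.
    rewrite (lc_ext_lt r1 (catf r1 ca cb) ca alpha alpha) by (intros; try apply catf_l; auto).
    replace (fun j => catf r1 ca cb (r1 + j)%nat) with cb
      by (apply functional_extensionality; intros; symmetry; apply catf_r).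
    f_equal; apply functional_extensionality; intros k; unfold zero_seq; ring. }
  exists (Nat.min n r1), (n - Nat.min n r1)%nat. repeat split; [lia| |].
  - apply (dim_ge_le Pp r1); [lia | exists alpha; auto].
  - apply (dim_ge_le Pm r2); [lia | exists beta; auto].
Qed.

Lemma dim_ge_Isum_join n1 n2 :
  (forall a, Pp a -> P (Isum a zero_seq)) -> (forall b, Pm b -> P (Isum zero_seq b)) ->
  dim_ge Pp n1 -> dim_ge Pm n2 -> dim_ge P (n1 + n2).
Proof.
  intros Hp Hm [wa [Ha Hia]] [wb [Hb Hib]].
  exists (fun i => Isum (catf n1 wa (fun _ => zero_seq) i) (catf n1 (fun _ => zero_seq) wb i)).
  split.
  - intros i Hi. unfold catf. destruct (Nat.ltb_spec i n1).
    + apply Hp, Ha. assumption.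
    + apply Hm, Hb. lia.
  - intros c Hc.
    assert (H0 : Isum (lc (n1 + n2) c (catf n1 wa (fun _ => zero_seq)))
                      (lc (n1 + n2) c (catf n1 (fun _ => zero_seq) wb)) = zero_seq).
    { rewrite <- lc_Isum. apply functional_extensionality. exact Hc. }
    rewrite Isum_eq_zero, !lc_catf, !lc_zero_family in H0. destruct H0 as [Ea Eb].
    assert (Hlow : forall i, (i < n1)%nat -> c i = RtoC 0).
    { apply Hia. intros k. pose proof (f_equal (fun u => u k) Ea) as E.
      unfold zero_seq in E. simpl in E. rewrite Cplus_0_r in E. exact E. }
    assert (Hhigh : forall j, (j < n2)%nat -> c (n1 + j)%nat = RtoC 0).
    { apply (Hib (fun j => c (n1 + j)%nat)). intros k. pose proof (f_equal (fun u => u k) Eb) as E.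
      unfold zero_seq in E. simpl in E. rewrite Cplus_0_l in E. exact E. }
    intros i Hi. destruct (Nat.lt_ge_cases i n1); [auto|].
    replace i with (n1 + (i - n1))%nat by lia. apply Hhigh. lia.
Qed.

End DirectSum.

(** * The operators *)

Lemma mul_per_Isum (v a b : fseq) :
  mul_per v (Isum a b) = Isum (mul_half v a) (mul_half v b).
Proof.
  apply functional_extensionality. intros n. unfold mul_per, mul_half, Vper.
  destruct (Z.Even_or_Odd n) as [[k ->]|[k ->]].
  - rewrite Isum_even. apply zSeries_even_support; intros z.
    + replace (2 * k - 2 * z)%Z with (2 * (k - z))%Z by lia. rewrite Iplus_even, Isum_even. reflexivity.
    + replace (2 * k - (2 * z + 1))%Z with (2 * (k - z - 1) + 1)%Z by lia.
      rewrite Iplus_odd. apply Cmult_0_l.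
  - rewrite Isum_odd. apply zSeries_odd_support; intros z.
    + replace (2 * k + 1 - 2 * z)%Z with (2 * (k - z) + 1)%Z by lia.
      rewrite Iplus_odd. apply Cmult_0_l.
    + replace (2 * k + 1 - (2 * z + 1))%Z with (2 * (k - z))%Z by lia.
      rewrite Iplus_even, Isum_odd. reflexivity.
Qed.

Lemma Dpow_Isum m (a b : fseq) :
  Dpow freq_per m (Isum a b) = Isum (Dpow freq_plus m a) (Dpow freq_minus m b).
Proof.
  apply functional_extensionality. intros n. unfold Dpow.
  destruct (Z.Even_or_Odd n) as [[z ->]|[z ->]]; rewrite ?Isum_even, ?Isum_odd; reflexivity.
Qed.

Lemma S_op_Isum m (v a b : fseq) : S_op m v (Isum a b) = Isum (Sp_op m v a) (Sm_op m v b).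
Proof.
  unfold S_op, Sp_op, Sm_op, Sact. rewrite Dpow_Isum, mul_per_Isum. apply Isum_map2.
Qed.

Lemma weight_nonneg (x s : Z) (c : C) : 0 <= powerRZ (jb x) s * Cmod c ^ 2.
Proof.
  apply Rmult_le_pos; [apply powerRZ_le | apply pow2_ge_0].
  unfold jb. pose proof (Rabs_pos (IZR x)). lra.
Qed.

Lemma inH_Isum s (a b : fseq) :
  inH freq_per s (Isum a b) <-> inH freq_plus s a /\ inH freq_minus s b.
Proof.
  apply zsummable_interleave; intros z; try apply weight_nonneg;
    rewrite ?Isum_even, ?Isum_odd; reflexivity.
Qed.

Lemma S_dom_Isum m (v a b : fseq) : S_dom m v (Isum a b) <-> Sp_dom m v a /\ Sm_dom m v b.
Proof.
  unfold S_dom, Sp_dom, Sm_dom, Sdom. fold (S_op m v) (Sp_op m v) (Sm_op m v).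
  rewrite S_op_Isum, !inH_Isum. tauto.
Qed.

Lemma inH_zero freq s : inH freq s zero_seq.
Proof. split; apply ex_series_0; intros n; unfold zero_seq; rewrite Cmod_0; ring. Qed.

Lemma mul_half_zero (v : fseq) : mul_half v zero_seq = zero_seq.
Proof.
  apply functional_extensionality. intros k. apply zSeries_0. intros. apply Cmult_0_r.
Qed.

Lemma Sact_zero freq mul m : mul zero_seq = zero_seq -> Sact freq mul m zero_seq = zero_seq.
Proof.
  intros Hmul. apply functional_extensionality. intros k.
  unfold Sact, Dpow. rewrite Hmul. unfold zero_seq. ring.
Qed.

Lemma Sdom_zero freq mul m : mul zero_seq = zero_seq -> Sdom freq mul m zero_seq.
Proof. intros Hmul. split; [|rewrite Sact_zero by exact Hmul]; apply inH_zero. Qed.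

Lemma gker_zero (Dom : fseq -> Prop) (A : fseq -> fseq) lam :
  Dom zero_seq -> A zero_seq = zero_seq -> forall k, gker Dom A lam k zero_seq.
Proof.
  intros Hdom HA k. induction k as [|k IH]; simpl; [reflexivity|]. split; [exact Hdom|].
  replace (fun j => Cminus (A zero_seq j) (Cmult lam (zero_seq j))) with zero_seq; [exact IH|].
  rewrite HA. apply functional_extensionality. intros. unfold zero_seq. ring.
Qed.

Lemma gker_Isum m (v : fseq) lam k : forall a b,
  gker (S_dom m v) (S_op m v) lam k (Isum a b)
  <-> gker (Sp_dom m v) (Sp_op m v) lam k a /\ gker (Sm_dom m v) (Sm_op m v) lam k b.
Proof.
  induction k as [|k IH]; intros a b; simpl; [apply Isum_eq_zero|].
  rewrite S_dom_Isum, S_op_Isum, (Isum_map2 (fun x y => Cminus x (Cmult lam y))), IH.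
  tauto.
Qed.

Lemma gen_eig_Isum m (v : fseq) lam a b :
  gen_eig (S_dom m v) (S_op m v) lam (Isum a b) ->
  gen_eig (Sp_dom m v) (Sp_op m v) lam a /\ gen_eig (Sm_dom m v) (Sm_op m v) lam b.
Proof. intros [k Hk]. apply gker_Isum in Hk as [Ha Hb]. split; exists k; assumption. Qed.

Lemma gen_eig_Isum_l m (v : fseq) lam a :
  gen_eig (Sp_dom m v) (Sp_op m v) lam a -> gen_eig (S_dom m v) (S_op m v) lam (Isum a zero_seq).
Proof.
  intros [k Hk]. exists k. apply gker_Isum. split; [exact Hk|].
  apply gker_zero; [apply Sdom_zero | apply Sact_zero]; apply mul_half_zero.
Qed.

Lemma gen_eig_Isum_r m (v : fseq) lam b :
  gen_eig (Sm_dom m v) (Sm_op m v) lam b -> gen_eig (S_dom m v) (S_op m v) lam (Isum zero_seq b).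
Proof.
  intros [k Hk]. exists k. apply gker_Isum. split; [|exact Hk].
  apply gker_zero; [apply Sdom_zero | apply Sact_zero]; apply mul_half_zero.
Qed.

Theorem theorem6 (m : nat) (hm : (1 <= m)%nat) (v : fseq)
  (hVper : inH freq_per (- Z.of_nat m) (Vper v))
  (hVplus : inH freq_plus (- Z.of_nat m) v) :
  (forall a b : fseq,
     S_dom m v (fun n => Cplus (Iplus a n) (Iminus b n))
     <-> Sp_dom m v a /\ Sm_dom m v b) /\
  (forall a b : fseq, Sp_dom m v a -> Sm_dom m v b ->
     S_op m v (fun n => Cplus (Iplus a n) (Iminus b n))
     = (fun n => Cplus (Iplus (Sp_op m v a) n) (Iminus (Sm_op m v b) n))) /\
  (forall (lam : C) (n : nat),
     mult_ge (S_dom m v) (S_op m v) lam n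
     <-> exists n1 n2, n = (n1 + n2)%nat /\
           mult_ge (Sp_dom m v) (Sp_op m v) lam n1 /\
           mult_ge (Sm_dom m v) (Sm_op m v) lam n2).
Proof.
  split; [|split].
  - exact (S_dom_Isum m v).
  - intros a b _ _. exact (S_op_Isum m v a b).
  - intros lam n. split.
    + exact (dim_ge_Isum_split _ _ _ n (gen_eig_Isum m v lam)).
    + intros [n1 [n2 [-> [H1 H2]]]].
      exact (dim_ge_Isum_join _ _ _ n1 n2 (gen_eig_Isum_l m v lam) (gen_eig_Isum_r m v lam) H1 H2).
Qed.
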